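(* Let $\ell \ge q \ge 1$. Let $\mathbf{z} \in \mathbb{R}^{\ell}$ (the observations), let $\boldsymbol\Gamma_q$ be a real $\ell \times q$ matrix of full column rank (the truncated basis), and let $\boldsymbol\Sigma_{\mathbf{e}}, \boldsymbol\Sigma_{\boldsymbol\eta}$ be $\ell\times\ell$ symmetric positive definite matrices (observation error and model discrepancy variances). For an input $\mathbf{x}$, let $\mathrm{E}[\mathbf{c}(\mathbf{x})] \in \mathbb{R}^q$ and let $\mathrm{Var}[\mathbf{c}(\mathbf{x})]$ be a $q\times q$ symmetric positive semidefinite matrix (emulator mean and variance of the basis coefficients), and set $\mathrm{E}[f(\mathbf{x})] = \boldsymbol\Gamma_q \mathrm{E}[\mathbf{c}(\mathbf{x})]$ and $\mathrm{Var}[f(\mathbf{x})] = \boldsymbol\Gamma_q \mathrm{Var}[\mathbf{c}(\mathbf{x})] \boldsymbol\Gamma_q^T$. Define the field implausibility $$\mathcal{I}(\mathbf{x}) = (\mathbf{z} - \mathrm{E}[f(\mathbf{x})])^{T}\big(\mathrm{Var}[f(\mathbf{x})] + \boldsymbol\Sigma_{\mathbf{e}} + \boldsymbol\Sigma_{\boldsymbol\eta}\big)^{-1} (\mathbf{z} - \mathrm{E}[f(\mathbf{x})]).$$ Let $\mathbf{W} = \boldsymbol\Sigma_{\mathbf{e}} + \boldsymbol\Sigma_{\boldsymbol\eta}$ and $\boldsymbol\Psi = \boldsymbol\Gamma_q^T \mathbf{W}^{-1}\boldsymbol\Gamma_q$. Define the reconstruction error $$\mathcal{R}_{\mathbf{W}}(\boldsymbol\Gamma_q,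 \mathbf{z}) = \big(\mathbf{z} - \boldsymbol\Gamma_q \boldsymbol\Psi^{-1}\boldsymbol\Gamma_q^T\mathbf{W}^{-1}\mathbf{z}\big)^T \mathbf{W}^{-1}\big(\mathbf{z} - \boldsymbol\Gamma_q \boldsymbol\Psi^{-1}\boldsymbol\Gamma_q^T\mathbf{W}^{-1}\mathbf{z}\big),$$ the projected quantities $\mathbf{c}(\mathbf{z}) = \boldsymbol\Psi^{-1}\boldsymbol\Gamma_q^T\mathbf{W}^{-1}\mathbf{z}$, $\mathrm{Var}[\mathbf{c}(\mathbf{e})] = \boldsymbol\Psi^{-1}\boldsymbol\Gamma_q^T\mathbf{W}^{-1}\boldsymbol\Sigma_{\mathbf{e}}\mathbf{W}^{-1}\boldsymbol\Gamma_q\boldsymbol\Psi^{-T}$, $\mathrm{Var}[\mathbf{c}(\boldsymbol\eta)] = \boldsymbol\Psi^{-1}\boldsymbol\Gamma_q^T\mathbf{W}^{-1}\boldsymbol\Sigma_{\boldsymbol\eta}\mathbf{W}^{-1}\boldsymbol\Gamma_q\boldsymbol\Psi^{-T}$, and the coefficient implausibility $$\tilde{\mathcal{I}}_{\mathbf{W}}(\mathbf{x}) = (\mathbf{c}(\mathbf{z}) - \mathrm{E}[\mathbf{c}(\mathbf{x})])^{T}\big(\mathrm{Var}[\mathbf{c}(\mathbf{x})] + \mathrm{Var}[\mathbf{c}(\mathbf{e})] + \mathrm{Var}[\mathbf{c}(\boldsymbol\eta)]\big)^{-1} (\mathbf{c}(\mathbf{z}) - \mathrm{E}[\mathbf{c}(\mathbf{x})]).$$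 Then $$\mathcal{I}(\mathbf{x}) = \mathcal{R}_{\mathbf{W}}(\boldsymbol\Gamma_q, \mathbf{z}) + \tilde{\mathcal{I}}_{\mathbf{W}}(\mathbf{x}).$$
   Context: This is the setting of history matching a computer model with $\ell$-dimensional output $f(\mathbf{x})$ emulated through coefficients on a $q$-dimensional basis $\boldsymbol\Gamma_q$ (columns are basis vectors), with statistical model $\mathbf{z} = f(\mathbf{x}^* ) + \boldsymbol\eta + \mathbf{e}$, where $\boldsymbol\eta$ and $\mathbf{e}$ are uncorrelated mean-zero terms with variances $\boldsymbol\Sigma_{\boldsymbol\eta}$ and $\boldsymbol\Sigma_{\mathbf{e}}$. All projections of $\ell$-dimensional quantities onto the basis are performed in the weighted norm with weight matrix $\mathbf{W}$, i.e. a vector $\mathbf{v}$ is projected to coefficients $(\boldsymbol\Gamma_q^T\mathbf{W}^{-1}\boldsymbol\Gamma_q)^{-1}\boldsymbol\Gamma_q^T\mathbf{W}^{-1}\mathbf{v}$. *)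

From HB Require Import structures.
From mathcomp Require Import all_boot all_order all_algebra.
Set Implicit Arguments. Unset Strict Implicit. Unset Printing Implicit Defensive.
Import Order.TTheory GRing.Theory Num.Theory.
Local Open Scope ring_scope.

Definition qform (R : ringType) (n : nat) (A : 'M[R]_n) (v : 'cV[R]_n) : R :=
  ((v^T *m A *m v) ord0 ord0).

Definition sym_mx (R : ringType) (n : nat) (A : 'M[R]_n) : Prop := A^T = A.

Definition posdef (R : numDomainType) (n : nat) (A : 'M[R]_n) : Prop :=
  sym_mx A /\ forall v : 'cV[R]_n, v != 0 -> 0 < qform A v.

Definition psd (R : numDomainType) (n : nat) (A : 'M[R]_n) : Prop :=
  sym_mx A /\ forall v : 'cV[R]_n, 0 <= qform A v.

Section HM.
Variables (R : realFieldType) (l q : nat).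
Variables (z : 'cV[R]_l) (G : 'M[R]_(l, q)) (Se Seta : 'M[R]_l)
          (Ec : 'cV[R]_q) (Vc : 'M[R]_q).

Definition Ef : 'cV[R]_l := G *m Ec.
Definition Vf : 'M[R]_l := G *m Vc *m G^T.

Definition field_impl : R := qform (invmx (Vf + Se + Seta)) (z - Ef).

Definition Wm : 'M[R]_l := Se + Seta.
Definition Psi : 'M[R]_q := G^T *m invmx Wm *m G.
Definition Pinv : 'M[R]_q := invmx Psi.

(* coefficients of z projected onto the basis in the W-weighted norm *)
Definition cz : 'cV[R]_q := Pinv *m G^T *m invmx Wm *m z.

Definition recon_err : R := qform (invmx Wm) (z - G *m cz).

Definition Vce : 'M[R]_q := Pinv *m G^T *m invmx Wm *m Se *m invmx Wm *m G *m Pinv^T.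
Definition Vceta : 'M[R]_q := Pinv *m G^T *m invmx Wm *m Seta *m invmx Wm *m G *m Pinv^T.

Definition coef_impl : R := qform (invmx (Vc + Vce + Vceta)) (cz - Ec).
End HM.

From HB Require Import structures.
From mathcomp Require Import all_boot all_order all_algebra.
Import Order.TTheory GRing.Theory Num.Theory.
Local Open Scope ring_scope.

(** Put [M = G Vc G^T + W] and split [z - E[f(x)] = r + G d] with the W-residual
    [r = z - G c(z)] and [d = c(z) - E[c(x)]].  Since [G^T W^{-1} r = 0] we get
    [M^{-1} r = W^{-1} r], and the Woodbury-type identity
    [M^{-1} G = W^{-1} G Psi^{-1} (Vc + Psi^{-1})^{-1}] handles the range of [G];
    the cross terms of the quadratic form vanish, leaving [R_W + I~_W].  The
    projected variances of [Se] and [Seta] add up to [Psi^{-1}] because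
    [Se + Seta = W]. *)

Section PositiveDefinite.
Set Implicit Arguments.
Variable R : numFieldType.
Implicit Types (m n : nat).

Lemma qformD n (A B : 'M[R]_n) v : qform (A + B) v = qform A v + qform B v.
Proof. by rewrite /qform mulmxDr mulmxDl mxE. Qed.

Lemma posdef_psd n (A : 'M[R]_n) : posdef A -> psd A.
Proof.
case=> sA pA; split=> // v; have [->|nv] := eqVneq v 0; last exact/ltW/pA.
by rewrite /qform mulmx0 mxE.
Qed.

Lemma posdef_unitmx n (A : 'M[R]_n) : posdef A -> A \in unitmx.
Proof.
case=> _ pA; rewrite -row_free_unit -kermx_eq0; apply/eqP/row_matrixP => i.
rewrite row0; apply/eqP/contraT; rewrite -trmx_eq0 => /pA.
by rewrite /qform trmxK -row_mul mulmx_ker row0 mul0mx mxE ltxx.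
Qed.

Lemma posdef_invmx n (A : 'M[R]_n) : posdef A -> posdef (invmx A).
Proof.
move=> pdA; have uA := posdef_unitmx pdA; case: pdA => sA pA.
split=> [|v nv]; first by rewrite /sym_mx trmx_inv sA.
have nAv : invmx A *m v != 0.
  by apply: contraNneq nv => Av0; rewrite -(mulKVmx uA v) Av0 mulmx0.
have := pA _ nAv; rewrite /qform trmx_mul trmx_inv sA.
by rewrite -!mulmxA (mulmxA A) mulmxV // mul1mx.
Qed.

Lemma psd_add_posdef n (A B : 'M[R]_n) : psd A -> posdef B -> posdef (A + B).
Proof.
move=> [sA pA] [sB pB]; split=> [|v nv]; first by rewrite /sym_mx linearD /= sA sB.
by rewrite qformD ltr_wpDl ?pB.
Qed.

Lemma posdef_add n (A B : 'M[R]_n) : posdef A -> posdef B -> posdef (A + B).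
Proof. by move/posdef_psd; apply: psd_add_posdef. Qed.

Lemma psd_congr m n (A : 'M[R]_n) (G : 'M[R]_(m, n)) :
  psd A -> psd (G *m A *m G^T).
Proof.
move=> [sA pA]; split=> [|v]; first by rewrite /sym_mx !trmx_mul trmxK sA mulmxA.
by have := pA (G^T *m v); rewrite /qform trmx_mul trmxK !mulmxA.
Qed.

Lemma posdef_congr m n (A : 'M[R]_m) (G : 'M[R]_(m, n)) :
  \rank G = n -> posdef A -> posdef (G^T *m A *m G).
Proof.
move=> rkG [sA pA]; split=> [|v nv]; first by rewrite /sym_mx !trmx_mul trmxK sA mulmxA.
have nGv : G *m v != 0.
  rewrite -trmx_eq0 trmx_mul mulmx_free_eq0 ?trmx_eq0 //.
  by rewrite /row_free mxrank_tr rkG.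
by have := pA _ nGv; rewrite /qform trmx_mul !mulmxA.
Qed.

End PositiveDefinite.

Section LowRankUpdate.
Set Implicit Arguments.
Unset Strict Implicit.
Variables (R : comUnitRingType) (l q : nat).
Variables (G : 'M[R]_(l, q)) (W : 'M[R]_l) (V : 'M[R]_q).
Let Wi := invmx W.
Let PsiW := G^T *m Wi *m G.
Let M := G *m V *m G^T + W.
Let K := V + invmx PsiW.
Hypotheses (uW : W \in unitmx) (uPsi : PsiW \in unitmx).
Hypotheses (uM : M \in unitmx) (uK : K \in unitmx).

Lemma invmx_lowrank_orth (r : 'cV[R]_l) :
  G^T *m Wi *m r = 0 -> invmx M *m r = Wi *m r.
Proof.
move=> orth_r; rewrite -[in LHS](mulKVmx uW r) -/Wi.
suff -> : W *m (Wi *m r) = M *m (Wi *m r) by rewrite mulKmx.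
by rewrite /M mulmxDl -!mulmxA (mulmxA G^T) orth_r !mulmx0 add0r.
Qed.

Lemma invmx_lowrank_mulmx :
  invmx M *m G = Wi *m G *m invmx PsiW *m invmx K.
Proof.
apply: (canLR (mulKmx uM)); rewrite /M mulmxDl -!mulmxA mulKVmx //.
rewrite (mulmxA G^T) (mulmxA (G^T *m Wi)) -/PsiW mulKVmx //.
by rewrite -mulmxDr -mulmxDl -/K mulmxV ?mulmx1.
Qed.

Lemma residual_orth (z : 'cV[R]_l) :
  G^T *m Wi *m (z - G *m (invmx PsiW *m G^T *m Wi *m z)) = 0.
Proof. by rewrite mulmxBr !mulmxA -/PsiW mulmxV // mul1mx subrr. Qed.

Hypothesis sW : sym_mx W.

Lemma sym_PsiW : sym_mx PsiW.
Proof. by rewrite /sym_mx !trmx_mul trmxK trmx_inv sW mulmxA. Qed.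

Lemma proj_var_split (A B : 'M[R]_l) : A + B = W ->
  let P := invmx PsiW in
  P *m G^T *m Wi *m A *m Wi *m G *m P^T + P *m G^T *m Wi *m B *m Wi *m G *m P^T = P.
Proof.
move=> defW P; rewrite -!mulmxA -!mulmxDr -mulmxDl defW mulKVmx //.
rewrite (mulmxA G^T) (mulmxA (G^T *m Wi)) -/PsiW mulKmx //.
by rewrite /P trmx_inv sym_PsiW.
Qed.

Lemma qform_lowrank_split (r : 'cV[R]_l) (d : 'cV[R]_q) :
  G^T *m Wi *m r = 0 ->
  qform (invmx M) (r + G *m d) = qform Wi r + qform (invmx K) d.
Proof.
move=> orth_r.
have r_orth : r^T *m Wi *m G = 0.
  by apply: trmx_inj; rewrite !trmx_mul trmxK trmx_inv sW mulmxA orth_r !trmx0.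
rewrite /qform -!mulmxA mulmxDr invmx_lowrank_orth // (mulmxA (invmx M)).
rewrite invmx_lowrank_mulmx [(r + _)^T]linearD /= trmx_mul !mulmxDl !mulmxDr.
rewrite -!mulmxA (mulmxA G^T) orth_r mulmx0 add0r.
rewrite [r^T *m (Wi *m (G *m _))]mulmxA (mulmxA (r^T *m Wi)) r_orth mul0mx addr0.
rewrite (mulmxA G^T) (mulmxA (G^T *m Wi)) -/PsiW mulKVmx //.
by rewrite mxE.
Qed.

End LowRankUpdate.

Theorem theorem1 (R : realFieldType) (l q : nat) (hq : (0 < q)%N) (hql : (q <= l)%N)
  (z : 'cV[R]_l) (G : 'M[R]_(l, q)) (Se Seta : 'M[R]_l)
  (Ec : 'cV[R]_q) (Vc : 'M[R]_q)
  (hG : \rank G = q) (hSe : posdef Se) (hSeta : posdef Seta) (hVc : psd Vc) :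
  field_impl z G Se Seta Ec Vc =
  recon_err z G Se Seta + coef_impl z G Se Seta Ec Vc.
Proof.
have pdW : posdef (Wm Se Seta) := posdef_add hSe hSeta.
have pdPsi : posdef (Psi G Se Seta) := posdef_congr hG (posdef_invmx pdW).
have pdM : posdef (Vf G Vc + Wm Se Seta) := psd_add_posdef (psd_congr G hVc) pdW.
have pdK : posdef (Vc + Pinv G Se Seta) := psd_add_posdef hVc (posdef_invmx pdPsi).
have [uW uPsi] := (posdef_unitmx pdW, posdef_unitmx pdPsi).
have [uM uK] := (posdef_unitmx pdM, posdef_unitmx pdK).
have sW : sym_mx (Wm Se Seta) := pdW.1.
have split_z : z - Ef G Ec = (z - G *m cz z G Se Seta) + G *m (cz z G Se Seta - Ec).
  by rewrite mulmxBr addrA subrK.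
rewrite /field_impl /coef_impl -!addrA proj_var_split // split_z.
exact: (qform_lowrank_split (V := Vc) uW uPsi uM uK sW _ (residual_orth uPsi z)).
Qed.
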